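(* Let $L\in\mathbb{R}^{m\times m}$ satisfy $\|\mathrm{e}^{\omega L}\|_\infty\le1$ for all $\omega>0$, and let $\rho>0$ and $f$ satisfy: there exists $\omega_0^+>0$ with $|\xi+\omega f(\xi)|\le\rho$ for all $\xi\in[-\rho,\rho]$, $\omega\in(0,\omega_0^+]$, and there exists $\omega_0^->0$ with $|\xi-\omega f(\xi)|\le\rho$ for all $\xi\in[-\rho,\rho]$, $\omega\in(0,\omega_0^-]$. Consider the classical fourth-order integrating factor Runge--Kutta scheme $$u^{(1)}=\mathrm{e}^{\frac{\tau}{2}L}u^n+\tfrac{\tau}{2}\mathrm{e}^{\frac{\tau}{2}L}f(u^n),\qquad u^{(2)}=\mathrm{e}^{\frac{\tau}{2}L}u^n+\tfrac{\tau}{2}f(u^{(1)}),$$ $$u^{(3)}=\mathrm{e}^{\tau L}u^n+\tau\,\mathrm{e}^{\frac{\tau}{2}L}f(u^{(2)}),$$ $$u^{n+1}=\mathrm{e}^{\tau L}u^n+\tau\Big(\tfrac16\mathrm{e}^{\tau L}f(u^n)+\tfrac13\mathrm{e}^{\frac{\tau}{2}L}f(u^{(1)})+\tfrac13\mathrm{e}^{\frac{\tau}{2}L}f(u^{(2)})+\tfrac16 f(u^{(3)})\Big).$$ If $\|u^n\|_\infty\le\rho$ and $0<\tau\le\frac23\min\{\omega_0^+,\omega_0^-\}$, then $\|u^{n+1}\|_\infty\le\rho$.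
   Context: $\|\cdot\|_\infty$ is the vector $\infty$-norm and induced matrix norm; $f(u)$ for a vector $u$ is applied componentwise. *)

From HB Require Import structures.
From mathcomp Require Import all_boot all_order all_algebra.
From mathcomp Require Import all_classical all_reals all_analysis.
Set Implicit Arguments. Unset Strict Implicit. Unset Printing Implicit Defensive.
Import Order.TTheory GRing.Theory Num.Theory.
Local Open Scope ring_scope.
Local Open Scope classical_set_scope.

Definition expmx (R : realType) (m : nat) (A : 'M[R]_m) : 'M[R]_m :=
  lim ((series (fun k : nat => (k`!%:R)^-1 *: (A ^+ k))) @ \oo).

Definition vnorm_inf (R : realType) (m : nat) (u : 'cV[R]_m) : R :=
  \big[Num.max/0]_(i < m) `|u i 0|.

Definition fvec (R : realType) (m : nat) (f : R -> R) (u : 'cV[R]_m) : 'cV[R]_m :=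
  map_mx f u.

Definition IFRK4_step (R : realType) (m : nat) (L : 'M[R]_m) (f : R -> R)
  (tau : R) (u : 'cV[R]_m) : 'cV[R]_m :=
  let Eh := expmx ((tau / 2) *: L) in
  let E := expmx (tau *: L) in
  let u1 := Eh *m u + (tau / 2) *: (Eh *m fvec f u) in
  let u2 := Eh *m u + (tau / 2) *: fvec f u1 in
  let u3 := E *m u + tau *: (Eh *m fvec f u2) in
  E *m u + tau *: ((6%:R)^-1 *: (E *m fvec f u)
                   + (3%:R)^-1 *: (Eh *m fvec f u1)
                   + (3%:R)^-1 *: (Eh *m fvec f u2)
                   + (6%:R)^-1 *: fvec f u3).

From HB Require Import structures.
From mathcomp Require Import all_boot all_order all_algebra.
From mathcomp Require Import all_classical all_reals all_analysis.
From mathcomp Require Import ring lra.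
Import Order.TTheory GRing.Theory Num.Theory.
Import numFieldNormedType.Exports.
Local Open Scope ring_scope.
Local Open Scope classical_set_scope.

(* Writing H = e^{tau/2 L}, the key structural fact is E = e^{tau L} = H H
   (the law e^{2B} = e^B e^B, proved here from the power-series definition of
   the matrix exponential by a Cauchy-product estimate).  With it, every
   stage of the scheme is a convex combination of vectors of the form
   H^k (v +- w f(v)) with v an earlier stage and w in {tau/2, tau, 3tau/2}
   (a Shu-Osher representation).  Each such vector lies in the ball because
   H is nonexpansive in the sup norm and the scalar forward/backward Euler
   maps xi |-> xi +- w f(xi) preserve [-rho, rho] for w <= w0; the ball is
   convex, so all stages and the new iterate stay in it, provided
   3 tau / 2 <= min(w0+, w0-). *)

Section MatrixNorm.
Context {R : realType}.

Lemma mx_norm_entry {p q} (A : 'M[R]_(p, q)) i j : `|A i j| <= `|A|.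
Proof.
rewrite [leRHS]/Num.Def.normr /= mx_normrE.
by apply/bigmax_geP; right => /=; exists (i, j).
Qed.

Lemma mx_norm_leP {p q} (A : 'M[R]_(p, q)) e : 0 <= e ->
  `|A| <= e <-> (forall i j, `|A i j| <= e).
Proof.
move=> e0; split=> [hA i j|hA]; first exact: le_trans (mx_norm_entry A i j) hA.
by rewrite /Num.Def.normr /= mx_normrE (bigmax_le _ e0) //= => -[i j] _.
Qed.

Lemma mx_norm_mul {p q r} (A : 'M[R]_(p, q)) (B : 'M[R]_(q, r)) :
  `|A *m B| <= q%:R * `|A| * `|B|.
Proof.
apply/mx_norm_leP => [|i j]; first by rewrite !mulr_ge0.
rewrite mxE (le_trans (ler_norm_sum _ _ _)) //.
rewrite (@le_trans _ _ (\sum_(k < q) `|A| * `|B|)) //.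
  by apply: ler_sum => k _; rewrite normrM ler_pM // mx_norm_entry.
by rewrite sumr_const card_ord -mulrA mulr_natl.
Qed.

Lemma mx_norm_exp {m} (A : 'M[R]_m) k : `|A ^+ k| <= (m%:R * `|A|) ^+ k.
Proof.
elim: k => [|k IH].
  apply/mx_norm_leP => // i j; rewrite expr0 mxE.
  by case: (i == j); rewrite ?normr1 ?normr0.
rewrite exprS -mulmxE (le_trans (mx_norm_mul _ _)) // exprS -!mulrA.
by rewrite ler_wpM2l // ler_wpM2l.
Qed.

Lemma vnorm_infE {m} (u : 'cV[R]_m) : vnorm_inf u = `|u|.
Proof.
apply/le_anti/andP; split.
  by apply: bigmax_le => // i _; exact: mx_norm_entry.
apply/mx_norm_leP => [|i j]; first exact: bigmax_ge_id.
by rewrite ord1; apply: le_bigmax.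
Qed.

End MatrixNorm.

(* Matrices over R form a complete normed space, so absolutely convergent
   matrix series converge. *)
HB.instance Definition _ (R : realType) (m n : nat) := Complete.on 'M[R]_(m, n).

Section ExpSeries.
Context {R : realType}.

Definition expmx_term {m} (A : 'M[R]_m) (k : nat) : 'M[R]_m :=
  (k`!%:R : R)^-1 *: A ^+ k.

(* Termwise, `|A^k / k!| <= c^k / k! with c = m |A|, and sum c^k/k! = e^c. *)
Lemma cvg_expmx_series {m} (A : 'M[R]_m) : cvgn (series (expmx_term A)).
Proof.
apply: normed_cvg.
have c0 : 0 <= m%:R * `|A| by rewrite mulr_ge0.
apply: (@series_le_cvg _ _ (exp_coeff (m%:R * `|A|))) => //.
- by move=> k; exact: normr_ge0.
- by move=> k; exact: exp_coeff_ge0.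
- move=> k /=; rewrite /expmx_term normrZ ger0_norm ?invr_ge0 // /exp_coeff /= mulrC.
  by rewrite ler_wpM2r ?invr_ge0 // mx_norm_exp.
- exact: is_cvg_series_exp_coeff.
Qed.

Lemma expmx_cvg {m} (A : 'M[R]_m) : series (expmx_term A) @ \oo --> expmx A.
Proof.
by have /cvg_ex[l hl] := cvg_expmx_series A; rewrite /expmx (cvg_lim _ hl).
Qed.

End ExpSeries.

Lemma sum_triangle {V : zmodType} N (G : nat -> nat -> V) :
  \sum_(0 <= j < N) \sum_(0 <= k < N | ~~ (N <= j + k)%N) G j k =
  \sum_(0 <= n < N) \sum_(0 <= j < n.+1) G j (n - j)%N.
Proof.
transitivity (\sum_(0 <= j < N) \sum_(0 <= n < N)
                 (if (j <= n)%N then G j (n - j)%N else 0)).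
  apply: eq_big_nat => j /andP[_ jN]; rewrite -big_mkcond /=.
  have -> : \sum_(0 <= i < N | (j <= i)%N) G j (i - j)%N =
             \sum_(j <= i < N) G j (i - j)%N by rewrite (big_nat_widenl j 0).
  rewrite -[X in \sum_(X <= _ < _) _]add0n big_addn.
  under [RHS]eq_bigr do rewrite addnK.
  rewrite [RHS](big_nat_widen _ _ N) ?leq_subr //.
  by apply: eq_bigl => k; rewrite ltn_subRL -ltnNge.
rewrite exchange_big_nat; apply: eq_big_nat => n /andP[_ nN].
by rewrite -big_mkcond /= [RHS](big_nat_widen _ _ N).
Qed.

(* The binomial theorem for (1 + 1)^n, divided by n!. *)
Lemma inv_fact_convolution {R : numFieldType} n :
  (n`!%:R : R)^-1 * 2%:R ^+ n =
  \sum_(0 <= j < n.+1) ((j`!%:R : R)^-1 * ((n - j)`!%:R)^-1).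
Proof.
have -> : (2%:R : R) ^+ n = \sum_(j < n.+1) 'C(n, j)%:R.
  by rewrite -[2%:R]/(1 + 1 : R) exprD1n; apply: eq_bigr => j _; rewrite expr1n.
rewrite mulr_sumr big_mkord; apply: eq_bigr => -[j /=]; rewrite ltnS => jn _.
have fact_neq0 k : (k`!%:R : R) != 0 by rewrite pnatr_eq0 -lt0n fact_gt0.
have -> : ('C(n, j)%:R : R) = n`!%:R / (j`!%:R * (n - j)`!%:R).
  by rewrite -(bin_fact jn) !natrM mulfK // mulf_neq0.
by field; rewrite !fact_neq0.
Qed.

Lemma exp_partial_square {R : numFieldType} {V : algType R} (x : V) N :
  (\sum_(0 <= k < N) (k`!%:R : R)^-1 *: x ^+ k) ^+ 2
   - \sum_(0 <= k < N) (k`!%:R : R)^-1 *: (2%:R *: x) ^+ k =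
  \sum_(0 <= j < N) \sum_(0 <= k < N | (N <= j + k)%N)
     ((j`!%:R : R)^-1 * (k`!%:R)^-1) *: x ^+ (j + k).
Proof.
rewrite expr2 mulr_suml.
under eq_bigr => j _ do rewrite mulr_sumr.
under eq_bigr => j _ do under eq_bigr => k _ do
  rewrite -scalerAl -scalerAr scalerA -exprD.
under eq_bigr => j _ do rewrite (bigID (fun k => (N <= j + k)%N)) /=.
rewrite big_split /= (sum_triangle N
  (fun j k => ((j`!%:R : R)^-1 * (k`!%:R)^-1) *: x ^+ (j + k))).
suff -> : \sum_(0 <= n < N) \sum_(0 <= j < n.+1)
    ((j`!%:R : R)^-1 * ((n - j)`!%:R)^-1) *: x ^+ (j + (n - j)) =
    \sum_(0 <= k < N) (k`!%:R : R)^-1 *: (2%:R *: x) ^+ k by rewrite addrK.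
apply: eq_big_nat => n _; rewrite exprZn scalerA inv_fact_convolution.
rewrite scaler_suml; apply: eq_big_nat => j /andP[_ jn].
by rewrite subnKC.
Qed.

Section ExpDouble.
Context {R : realType}.

Lemma cvg0_le_norm {V : normedModType R} {v : nat -> V} {t : nat -> R} :
  (forall n, `|v n| <= t n) -> t @ \oo --> 0 -> v @ \oo --> 0.
Proof.
move=> vt t0; apply: norm_cvg0.
apply: (@squeeze_cvgr _ _ _ _ (fun=> 0) t) => //; last exact: cvg_cst.
by near=> n; rewrite normr_ge0 vt.
Unshelve. all: by end_near. Qed.

Lemma cvg_mulmx {p q r} {X : nat -> 'M[R]_(p, q)} {Y : nat -> 'M[R]_(q, r)}
    {x : 'M[R]_(p, q)} {y : 'M[R]_(q, r)} :
  X @ \oo --> x -> Y @ \oo --> y -> (fun n => X n *m Y n) @ \oo --> x *m y.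
Proof.
move=> /subr_cvg0 /norm_cvg0P dX0 /subr_cvg0 /norm_cvg0P dY0; apply/subr_cvg0.
apply: (@cvg0_le_norm _ _ (fun n => q%:R * (`|X n - x| * `|Y n - y|
          + `|X n - x| * `|y| + `|x| * `|Y n - y|))).
  move=> n; set dX := X n - x; set dY := Y n - y.
  have -> : X n *m Y n - x *m y = dX *m dY + dX *m y + x *m dY.
    rewrite -[X n](subrK x) -[Y n](subrK y) -/dX -/dY mulmxDl !mulmxDr.
    by rewrite addrA addrK.
  have := mx_norm_mul dX dY; have := mx_norm_mul dX y; have := mx_norm_mul x dY.
  have := ler_normD (dX *m dY + dX *m y) (x *m dY).
  have := ler_normD (dX *m dY) (dX *m y).
  lra.
rewrite -[X in _ --> X](_ : q%:R * (0 * 0 + 0 * `|y| + `|x| * 0) = 0);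
  last by rewrite !(mulr0, mul0r, addr0).
apply: cvgM; first exact: cvg_cst.
by apply: cvgD; [apply: cvgD|]; apply: cvgM => //; exact: cvg_cst.
Qed.

Lemma expR_series_cvg (x : R) : series (exp_coeff x) @ \oo --> expR x.
Proof.
by have /cvg_ex[l hl] := is_cvg_series_exp_coeff x; rewrite /expR (cvg_lim _ hl).
Qed.

Lemma expmx_partial_defect_le {n} (B : 'M[R]_n.+1) N :
  `|series (expmx_term B) N *m series (expmx_term B) N
    - series (expmx_term (2%:R *: B)) N|
  <= series (exp_coeff (n.+1%:R * `|B|)) N ^+ 2
     - series (exp_coeff (2%:R * (n.+1%:R * `|B|))) N.
Proof.
set c := n.+1%:R * `|B|.
have scalar_defect := exp_partial_square (c : R^o) N.
have -> : series (exp_coeff c) N ^+ 2 - series (exp_coeff (2%:R * c)) N =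
    \sum_(0 <= j < N) \sum_(0 <= k < N | (N <= j + k)%N)
      ((j`!%:R : R)^-1 * (k`!%:R)^-1) * c ^+ (j + k).
  rewrite -scalar_defect /series /=.
  by congr (_ ^+ 2 - _); apply: eq_bigr => k _; rewrite /exp_coeff /= mulrC.
rewrite /series /= /expmx_term mulmxE -expr2 exp_partial_square.
rewrite (le_trans (ler_norm_sum _ _ _)) //; apply: ler_sum => j _.
rewrite (le_trans (ler_norm_sum _ _ _)) //; apply: ler_sum => k _.
rewrite normrZ ger0_norm ?mulr_ge0 ?invr_ge0 //.
by rewrite ler_wpM2l ?mulr_ge0 ?invr_ge0 // mx_norm_exp.
Qed.

Lemma expmx_double {m} (B : 'M[R]_m) : expmx (2%:R *: B) = expmx B *m expmx B.
Proof.
case: m B => [B|n B]; first by apply/matrixP => -[].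
set c := n.+1%:R * `|B|.
have scalar_defect0 : (fun N => series (exp_coeff c) N ^+ 2
                                - series (exp_coeff (2%:R * c)) N) @ \oo --> 0.
  rewrite -(subrr (expR c ^+ 2)) -[X in _ - X]expRM_natl.
  apply: cvgB; last exact: expR_series_cvg.
  by rewrite expr2; under eq_fun do rewrite expr2; apply: cvgM; exact: expR_series_cvg.
have defect0 := cvg0_le_norm (expmx_partial_defect_le B) scalar_defect0.
have defect_lim : (fun N => series (expmx_term B) N *m series (expmx_term B) N
                           - series (expmx_term (2%:R *: B)) N) @ \oo -->
                   expmx B *m expmx B - expmx (2%:R *: B).
  by apply: cvgB; [exact: cvg_mulmx (expmx_cvg B) (expmx_cvg B) | exact: expmx_cvg].
by apply/eqP; rewrite eq_sym -subr_eq0 (cvg_unique _ defect_lim defect0).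
Qed.

End ExpDouble.

Section Ball.
Context {R : realType}.

Lemma ball_convex {V : normedModType R} (s : seq (R * V)) r :
  all (fun p => 0 <= p.1) s -> all (fun p => `|p.2| <= r) s ->
  \sum_(p <- s) p.1 = 1 -> `|\sum_(p <- s) p.1 *: p.2| <= r.
Proof.
move=> w_ge0 s_ball w_sum1.
suff : `|\sum_(p <- s) p.1 *: p.2| <= (\sum_(p <- s) p.1) * r by rewrite w_sum1 mul1r.
elim: s w_ge0 s_ball {w_sum1} => [|[a v] s IH] /=; first by rewrite !big_nil normr0 mul0r.
move=> /andP[a0 /IH{}IH] /andP[v_ball /IH{}IH]; rewrite !big_cons mulrDl.
by rewrite (le_trans (ler_normD _ _)) // lerD // normrZ ger0_norm // ler_wpM2l.
Qed.

Lemma ball_map_mx {p q} (g : R -> R) (A : 'M[R]_(p, q)) r : 0 <= r ->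
  (forall xi, -r <= xi <= r -> `|g xi| <= r) -> `|A| <= r -> `|map_mx g A| <= r.
Proof.
move=> r0 g_ball /(mx_norm_leP _ _ r0) A_ball; apply/(mx_norm_leP _ _ r0) => i j.
by rewrite mxE g_ball // -ler_norml A_ball.
Qed.

End Ball.

Section ShuOsher.
Context {R : realType} {m : nat}.
Variables (H : 'M[R]_m) (F : 'cV[R]_m -> 'cV[R]_m) (tau : R) (u : 'cV[R]_m).

(* The IFRK4 step written with H = e^{tau/2 L} and e^{tau L} = H H. *)
Definition ifrk4_stage1 : 'cV[R]_m := H *m u + (tau / 2) *: (H *m F u).
Definition ifrk4_stage2 : 'cV[R]_m := H *m u + (tau / 2) *: F ifrk4_stage1.
Definition ifrk4_stage3 : 'cV[R]_m :=
  H *m H *m u + tau *: (H *m F ifrk4_stage2).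
Definition ifrk4 : 'cV[R]_m :=
  H *m H *m u + tau *: ((6%:R)^-1 *: (H *m H *m F u)
                        + (3%:R)^-1 *: (H *m F ifrk4_stage1)
                        + (3%:R)^-1 *: (H *m F ifrk4_stage2)
                        + (6%:R)^-1 *: F ifrk4_stage3).

Local Notation u1 := ifrk4_stage1.
Local Notation u2 := ifrk4_stage2.
Local Notation u3 := ifrk4_stage3.

Lemma ifrk4_stage1_SO : u1 = H *m (u + (tau / 2) *: F u).
Proof. by rewrite mulmxDr -scalemxAr. Qed.

Lemma ifrk4_stage2_SO :
  u2 = \sum_(p <- [:: (2%:R^-1, u1 + tau *: F u1);
                      (2%:R^-1, H *m (u - (tau / 2) *: F u))]) p.1 *: p.2.
Proof.
rewrite !big_cons big_nil addr0 /= /ifrk4_stage2 /ifrk4_stage1.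
rewrite !(mulmxDr, mulmxN) -!scalemxAr.
by apply/matrixP => i j; rewrite !mxE; field.
Qed.

Lemma ifrk4_stage3_SO :
  u3 = \sum_(p <- [:: (9%:R^-1, H *m H *m (u - tau *: F u));
                      (2%:R / 3%:R, H *m (u2 + (3%:R / 2%:R * tau) *: F u2));
                      (2%:R / 9%:R, H *m (u1 - (3%:R / 2%:R * tau) *: F u1))])
          p.1 *: p.2.
Proof.
rewrite !big_cons big_nil addr0 /= /ifrk4_stage3 /ifrk4_stage2 /ifrk4_stage1.
rewrite !(mulmxDr, mulmxN) -!scalemxAr !mulmxA.
by apply/matrixP => i j; rewrite !mxE; field.
Qed.

Lemma ifrk4_SO :
  ifrk4 = \sum_(p <- [:: (6%:R^-1, u3 + tau *: F u3);
                         (3%:R^-1, H *m (u2 + (tau / 2) *: F u2));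
                         (3%:R^-1, H *m (u1 + (tau / 2) *: F u1));
                         (6%:R^-1, H *m H *m u)]) p.1 *: p.2.
Proof.
rewrite !big_cons big_nil addr0 /= /ifrk4 /ifrk4_stage3 /ifrk4_stage2 /ifrk4_stage1.
rewrite !(mulmxDr, mulmxN) -!scalemxAr !mulmxA.
by apply/matrixP => i j; rewrite !mxE; field.
Qed.

End ShuOsher.

Lemma ifrk4_ball {R : realType} {m} (H : 'M[R]_m) (F : 'cV[R]_m -> 'cV[R]_m)
    (rho w0p w0m tau : R) (u : 'cV[R]_m) :
  (forall v : 'cV[R]_m, `|v| <= rho -> `|H *m v| <= rho) ->
  (forall w (v : 'cV[R]_m), 0 < w -> w <= w0p -> `|v| <= rho ->
     `|v + w *: F v| <= rho) ->
  (forall w (v : 'cV[R]_m), 0 < w -> w <= w0m -> `|v| <= rho ->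
     `|v - w *: F v| <= rho) ->
  0 < tau -> 3%:R / 2%:R * tau <= w0p -> 3%:R / 2%:R * tau <= w0m ->
  `|u| <= rho -> `|ifrk4 H F tau u| <= rho.
Proof.
move=> H_ball euler_plus euler_minus tau_gt0 tau_le_p tau_le_m u_ball.
have HH_ball (v : 'cV[R]_m) : `|v| <= rho -> `|H *m H *m v| <= rho.
  by move=> v_ball; rewrite -mulmxA !H_ball.
have u1_ball : `|ifrk4_stage1 H F tau u| <= rho.
  by rewrite ifrk4_stage1_SO; apply/H_ball/euler_plus => //; lra.
have u2_ball : `|ifrk4_stage2 H F tau u| <= rho.
  rewrite ifrk4_stage2_SO; apply: ball_convex; rewrite /= ?big_cons ?big_nil /=;
    repeat (apply/andP; split) => //; try lra.
  - by apply: euler_plus => //; lra.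
  - by apply/H_ball/euler_minus => //; lra.
have u3_ball : `|ifrk4_stage3 H F tau u| <= rho.
  rewrite ifrk4_stage3_SO; apply: ball_convex; rewrite /= ?big_cons ?big_nil /=;
    repeat (apply/andP; split) => //; try lra.
  - by apply/HH_ball/euler_minus => //; lra.
  - by apply/H_ball/euler_plus => //; lra.
  - by apply/H_ball/euler_minus => //; lra.
rewrite ifrk4_SO; apply: ball_convex; rewrite /= ?big_cons ?big_nil /=;
  repeat (apply/andP; split) => //; try lra.
- by apply: euler_plus => //; lra.
- by apply/H_ball/euler_plus => //; lra.
- by apply/H_ball/euler_plus => //; lra.
- exact: HH_ball.
Qed.

Lemma IFRK4_stepE {R : realType} {m} (L : 'M[R]_m) f tau u :
  IFRK4_step L f tau u = ifrk4 (expmx ((tau / 2) *: L)) (fvec f) tau u.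
Proof.
have E_eq : expmx (tau *: L) = expmx ((tau / 2) *: L) *m expmx ((tau / 2) *: L).
  by rewrite -expmx_double scalerA mulrC divfK ?pnatr_eq0.
by rewrite /IFRK4_step /= E_eq.
Qed.

Lemma fvec_euler_plus {R : realType} {m} (f : R -> R) (w : R) (v : 'cV[R]_m) :
  v + w *: fvec f v = map_mx (fun xi => xi + w * f xi) v.
Proof. by apply/matrixP => i j; rewrite !mxE. Qed.

Lemma fvec_euler_minus {R : realType} {m} (f : R -> R) (w : R) (v : 'cV[R]_m) :
  v - w *: fvec f v = map_mx (fun xi => xi - w * f xi) v.
Proof. by apply/matrixP => i j; rewrite !mxE. Qed.

Theorem mainTheorem6 (R : realType) (m : nat) (L : 'M[R]_m) (f : R -> R)
  (rho w0p w0m tau : R) (u : 'cV[R]_m) :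
  (forall w : R, 0 < w -> forall x : 'cV[R]_m,
      vnorm_inf (expmx (w *: L) *m x) <= vnorm_inf x) ->
  0 < rho ->
  0 < w0p ->
  (forall xi w : R, -rho <= xi <= rho -> 0 < w <= w0p -> `|xi + w * f xi| <= rho) ->
  0 < w0m ->
  (forall xi w : R, -rho <= xi <= rho -> 0 < w <= w0m -> `|xi - w * f xi| <= rho) ->
  vnorm_inf u <= rho ->
  0 < tau <= (2%:R / 3%:R) * Num.min w0p w0m ->
  vnorm_inf (IFRK4_step L f tau u) <= rho.
Proof.
move=> L_contr rho_gt0 _ f_plus _ f_minus u_ball /andP[tau_gt0 tau_le].
have min_le_p : Num.min w0p w0m <= w0p by rewrite ge_min lexx.
have min_le_m : Num.min w0p w0m <= w0m by rewrite ge_min lexx orbT.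
have rho_ge0 : 0 <= rho by exact: ltW.
rewrite vnorm_infE IFRK4_stepE; apply: (ifrk4_ball _ _ rho w0p w0m) => //.
- move=> v v_ball; rewrite -vnorm_infE (le_trans (L_contr _ _ v)) //.
    by rewrite divr_gt0.
  by rewrite vnorm_infE.
- move=> w v w_gt0 w_le v_ball; rewrite fvec_euler_plus.
  by apply: ball_map_mx => // xi xi_ball; apply: f_plus => //; rewrite w_gt0.
- move=> w v w_gt0 w_le v_ball; rewrite fvec_euler_minus.
  by apply: ball_map_mx => // xi xi_ball; apply: f_minus => //; rewrite w_gt0.
- lra.
- lra.
- by rewrite -vnorm_infE.
Qed.
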